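(* For every integer $t \geq 1$, there exists a connected non-bipartite graph whose adjacency matrix has exactly five distinct eigenvalues and which has exactly $t$ distinct valencies (vertex degrees).
   Context: Eigenvalues of a graph are the eigenvalues of its adjacency matrix. Graphs are finite, simple and undirected. *)

From HB Require Import structures.
From mathcomp Require Import all_boot all_order all_algebra.
From mathcomp Require Import algC.
Set Implicit Arguments. Unset Strict Implicit. Unset Printing Implicit Defensive.
Import Order.TTheory GRing.Theory Num.Theory.
Local Open Scope ring_scope.

Definition simple_graph (T : finType) (e : rel T) : Prop :=
  symmetric e /\ irreflexive e.

Definition adj_mx (T : finType) (e : rel T) : 'M[algC]_#|T| :=
  \matrix_(i, j) (e (enum_val i) (enum_val j))%:R.

Definition num_distinct_eigenvalues (T : finType) (e : rel T) (k : nat) : Prop :=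
  exists s : seq algC, uniq s /\ size s = k /\
    forall a : algC, eigenvalue (adj_mx e) a <-> a \in s.

Definition connected_graph (T : finType) (e : rel T) : Prop :=
  (0 < #|T|)%N /\ forall x y : T, connect e x y.

Definition bipartite (T : finType) (e : rel T) : Prop :=
  exists f : T -> bool, forall x y, e x y -> f x != f y.

Definition degree (T : finType) (e : rel T) (x : T) : nat := #|[set y | e x y]|.

Definition num_valencies (T : finType) (e : rel T) : nat :=
  size (undup [seq degree e x | x <- enum T]).

From mathcomp Require Import all_boot all_order all_algebra algC zify ring.
Set Implicit Arguments. Unset Strict Implicit. Unset Printing Implicit Defensive.
Import Order.TTheory GRing.Theory Num.Theory.
Local Open Scope ring_scope.

(* The graphs are complements of disjoint unions of complete multipartite graphs.  In such
   a complement a vertex is adjacent to everything except the other parts of its own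
   component, so an eigenvector for an eigenvalue [a <> -1] is constant on each part and the
   spectrum is governed by a linear system indexed by the parts, in [y = a + 1].
   Taking two copies of each [K_{p_d,q_d}] with [p_d q_d = r^2], not all balanced, the system
   forces [y = 0, r, -r] or [y] a root of [y^2 - N y + K - r^2] ([N] vertices,
   [K = sum p_d q_d] over ordered parts), and all five values occur.  The degree of a vertex is
   [N - 1 - (size of the opposite part)], so the part sizes [4^i, 4^(t-1-i)] ([i < t]) give
   [t] valencies.  Regular members of this family have [y = r] as a root of the quadratic, so
   for [t = 1] the complement of [K_3 + C_4], with spectrum [{4, 1, 0, -1, -3}], is used. *)

Lemma eigenvalue_adj_mxP (T : finType) (e : rel T) (a : algC) :
  eigenvalue (adj_mx e) a <->
  exists f : T -> algC, (exists x, f x != 0) /\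
    forall y, \sum_x f x * (e x y)%:R = a * f y.
Proof.
have mulA_row (v : 'rV_#|T|) j :
    (v *m adj_mx e) 0 j = \sum_x v 0 (enum_rank x) * (e x (enum_val j))%:R.
  rewrite !mxE (big_enum_val (A:=T)) /=.
  by apply: eq_bigr => i _; rewrite !mxE enum_valK.
split.
  move/eigenvalueP=> [v vA v_neq0]; exists (fun x => v 0 (enum_rank x)); split.
    have [i vi] : exists i, v 0 i != 0.
      apply/existsP; move: v_neq0; apply: contraR; rewrite negb_exists => /forallP v0.
      by apply/eqP/rowP => i; rewrite mxE; apply/eqP; have := v0 i; rewrite negbK.
    by exists (enum_val i); rewrite enum_valK.
  move=> y; have := congr1 (fun M : 'rV_#|T| => M 0 (enum_rank y)) vA.
  by rewrite mulA_row enum_rankK mxE => ->.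
move=> [f [[x fx] fA]]; apply/eigenvalueP.
exists (\row_i f (enum_val i)).
  apply/rowP => j; rewrite mulA_row !mxE -fA.
  by apply: eq_bigr => z _; rewrite mxE enum_rankK.
apply/eqP => /rowP /(_ (enum_rank x)); rewrite !mxE enum_rankK => f0.
by rewrite f0 eqxx in fx.
Qed.

Lemma sum_mul_indicator (T : finType) (f : T -> algC) (P : pred T) :
  \sum_x f x * (P x)%:R = \sum_(x | P x) f x.
Proof.
by rewrite [RHS]big_mkcond; apply: eq_bigr => x _; case: (P x); rewrite ?mulr1 ?mulr0.
Qed.

Lemma num_valencies_eq (T : finType) (e : rel T) (s : seq nat) :
  uniq s -> (forall d, d \in s <-> exists x, degree e x = d) ->
  num_valencies e = size s.
Proof.
move=> s_uniq s_deg; rewrite /num_valencies -(undup_id s_uniq).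
apply/perm_size/perm_undup => d; apply/mapP/idP.
  by move=> [x _ ->]; apply/s_deg; exists x.
by move/s_deg=> [x <-]; exists x; rewrite ?mem_enum.
Qed.

Section ComplementOfMultipartite.

Variables (C P : finType) (n : C * P -> nat).

Definition vertex : finType := {b : C * P & 'I_(n b)}.

Definition vertex_at b (i : 'I_(n b)) : vertex := Tagged (fun b => 'I_(n b)) i.

Definition multipartite_adj (x y : vertex) :=
  ((tag x).1 == (tag y).1) && ((tag x).2 != (tag y).2).

Definition co_adj (x y : vertex) := (x != y) && ~~ multipartite_adj x y.

Lemma simple_graph_co_adj : simple_graph co_adj.
Proof.
split=> [x y|x]; last by rewrite /co_adj eqxx.
by rewrite /co_adj /multipartite_adj eq_sym [_.1 == _]eq_sym [_.2 == _]eq_sym.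
Qed.

Lemma block_gt0 (x : vertex) : (0 < n (tag x))%N.
Proof. exact: leq_ltn_trans (leq0n _) (ltn_ord (tagged x)). Qed.

Lemma sum_vertex (R : nmodType) (F : vertex -> R) :
  \sum_x F x = \sum_b \sum_(j < n b) F (vertex_at j).
Proof.
rewrite (partition_big (fun x : vertex => tag x) predT) //.
apply: eq_bigr => b _.
rewrite (big_tag (fun i (j : 'I_(n i)) => F (vertex_at j)) b).
by apply: eq_bigr => x /eqP xb; rewrite (untagE _ _ xb) /vertex_at etaggedK.
Qed.

Lemma card_vertex : #|vertex| = (\sum_b n b)%N.
Proof.
by rewrite card_tagged sumnE big_map big_enum; apply: eq_bigr => b _; rewrite card_ord.
Qed.

Definition wsum (g : C * P -> algC) := \sum_b (n b)%:R * g b.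

Definition comp_wsum k (g : C * P -> algC) := \sum_(b | b.1 == k) (n b)%:R * g b.

Lemma sum_block_const (g : C * P -> algC) (Q : pred (C * P)) :
  \sum_(x : vertex | Q (tag x)) g (tag x) = \sum_(b | Q b) (n b)%:R * g b.
Proof.
rewrite big_mkcond sum_vertex [RHS]big_mkcond; apply: eq_bigr => b _ /=.
by rewrite sumr_const card_ord; case: (Q b); rewrite ?mul0rn // mulr_natl.
Qed.

Lemma sum_block_wsum (g : C * P -> algC) : \sum_(x : vertex) g (tag x) = wsum g.
Proof. exact: (sum_block_const g predT). Qed.

Lemma sum_block_comp (g : C * P -> algC) k :
  \sum_(x : vertex | (tag x).1 == k) g (tag x) = comp_wsum k g.
Proof. exact: (sum_block_const g (fun b => b.1 == k)). Qed.

Lemma sum_block1 (g : C * P -> algC) b :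
  \sum_(x : vertex | tag x == b) g (tag x) = (n b)%:R * g b.
Proof. by rewrite (sum_block_const g (pred1 b)) big_pred1_eq. Qed.

Lemma co_adj_sum (f : vertex -> algC) z :
  \sum_x f x * (co_adj x z)%:R =
    \sum_x f x - \sum_(x | (tag x).1 == (tag z).1) f x
    + \sum_(x | tag x == tag z) f x - f z.
Proof.
have co_adjE x : (co_adj x z)%:R = 1 - ((tag x).1 == (tag z).1)%:R
     + (tag x == tag z)%:R - (x == z)%:R :> algC.
  rewrite /co_adj /multipartite_adj.
  have -> : (tag x == tag z) = ((tag x).1 == (tag z).1) && ((tag x).2 == (tag z).2).
    by case: (tag x) (tag z) => [? ?] [? ?].
  case: (eqVneq x z) => [->|_]; rewrite ?eqxx /=; first by rewrite subrr add0r subrr.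
  by case: eqP => _; case: eqP => _ /=; rewrite ?subr0 ?subrr ?add0r ?addr0.
under eq_bigr do rewrite co_adjE !mulrDr !mulrN !mulr1.
by rewrite !sumrB big_split /= !sum_mul_indicator big_pred1_eq sumrB sum_mul_indicator.
Qed.

Lemma co_adj_eigen_blocks a : eigenvalue (adj_mx co_adj) a ->
  a = -1 \/ exists g, (exists b, (0 < n b)%N /\ g b != 0) /\
    forall b, (a + 1) * g b = wsum g - comp_wsum b.1 g + (n b)%:R * g b.
Proof.
move/eigenvalue_adj_mxP=> [f [[x0 fx0] fA]].
have [a1_0|a1_neq0] := eqVneq (a + 1) 0.
  by left; apply/eqP; rewrite -addr_eq0 a1_0.
right.
pose S := \sum_x f x.
pose SC k := \sum_(x | (tag x).1 == k) f x.
pose SB b := \sum_(x | tag x == b) f x.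
pose g b := (S - SC b.1 + SB b) / (a + 1).
(* By [co_adj_sum], [(a + 1) f z] only depends on the block of [z]. *)
have f_block z : f z = g (tag z).
  rewrite /g; apply: (canRL (mulfK a1_neq0)).
  by have := fA z; rewrite co_adj_sum mulrDr mulr1 mulrC => <-; rewrite subrK.
have S_wsum : S = wsum g.
  by rewrite -sum_block_wsum; apply: eq_bigr => x _; rewrite f_block.
have SC_wsum k : SC k = comp_wsum k g.
  by rewrite -sum_block_comp; apply: eq_bigr => x _; rewrite f_block.
have SB_block b : SB b = (n b)%:R * g b.
  by rewrite -sum_block1; apply: eq_bigr => x _; rewrite f_block.
exists g; split; first by exists (tag x0); rewrite -f_block block_gt0.
by move=> b; rewrite -S_wsum -SC_wsum -SB_block /g mulrC divfK.
Qed.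

Lemma co_adj_eigenvalue_blocks a g : (exists b, (0 < n b)%N /\ g b != 0) ->
  (forall b, (0 < n b)%N ->
     (a + 1) * g b = wsum g - comp_wsum b.1 g + (n b)%:R * g b) ->
  eigenvalue (adj_mx co_adj) a.
Proof.
move=> [b [b_gt0 gb]] g_sys; apply/eigenvalue_adj_mxP.
exists (fun z => g (tag z)); split; first by exists (vertex_at (Ordinal b_gt0)).
move=> z; rewrite co_adj_sum sum_block_wsum sum_block_comp sum_block1 -g_sys ?block_gt0 //.
by rewrite mulrDl mul1r addrK.
Qed.

(* Two vertices of one block are twins, so their difference is a (-1)-eigenvector. *)
Lemma co_adj_eigenvalue_twin b : (1 < n b)%N -> eigenvalue (adj_mx co_adj) (-1).
Proof.
move=> b_gt1; have b_gt0 := ltnW b_gt1.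
pose z0 := vertex_at (Ordinal b_gt0); pose z1 := vertex_at (Ordinal b_gt1).
have z01 : z0 != z1 by rewrite eq_Tagged.
have sum_delta (Q : pred vertex) z : \sum_(x | Q x) (x == z)%:R = (Q z)%:R :> algC.
  rewrite big_mkcond (bigD1 z) //= eqxx big1 ?addr0; first by case: (Q z).
  by move=> x /negbTE ->; case: (Q x).
have sum_diff (Q : pred vertex) : Q z0 = Q z1 ->
    \sum_(x | Q x) ((x == z0)%:R - (x == z1)%:R) = 0 :> algC.
  by move=> Q01; rewrite sumrB !sum_delta Q01 subrr.
apply/eigenvalue_adj_mxP; exists (fun x => (x == z0)%:R - (x == z1)%:R); split.
  by exists z0; rewrite eqxx (negbTE z01) subr0 oner_neq0.
move=> y; rewrite co_adj_sum (sum_diff predT) //.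
rewrite (sum_diff (fun x => (tag x).1 == (tag y).1)) //.
by rewrite (sum_diff (fun x => tag x == tag y)) // subrr add0r mulN1r sub0r.
Qed.

Lemma degree_co_adj z :
  (degree co_adj z + 1 +
   \sum_(b | (b.1 == (tag z).1) && (b.2 != (tag z).2)) n b)%N = #|vertex|.
Proof.
rewrite -sum1_card.
transitivity (\sum_(x : vertex) (co_adj z x + (x == z) + multipartite_adj z x))%N; last first.
  apply: eq_bigr => x _; rewrite /co_adj; case: (eqVneq x z) => [->|_].
    by rewrite /multipartite_adj !eqxx.
  by case: (multipartite_adj z x).
rewrite !big_split /=; congr (_ + _ + _)%N.
- rewrite /degree -sum1_card big_mkcond /=.
  by apply: eq_bigr => x _; rewrite in_set; case: (co_adj z x).
- by rewrite big_mkcond /= (bigD1 z) //= big1 ?eqxx // => x /negbTE ->.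
rewrite sum_vertex big_mkcond /=; apply: eq_bigr => b _.
rewrite /multipartite_adj /= sum_nat_const card_ord [b.1 == _]eq_sym [b.2 == _]eq_sym.
by case: ((tag z).1 == b.1); case: ((tag z).2 == b.2); rewrite /= ?muln1 ?muln0.
Qed.

Lemma comp_wsum_pair k g : comp_wsum k g = \sum_p (n (k, p))%:R * g (k, p).
Proof.
transitivity (\sum_(i | i == k) \sum_p (n (i, p))%:R * g (i, p)); last exact: big_pred1_eq.
by rewrite pair_big_dep; apply: eq_big => [[i j]|[i j] _] //=; rewrite andbT.
Qed.

Lemma co_adj_other_comp (x y : vertex) : (tag x).1 != (tag y).1 -> co_adj x y.
Proof.
move=> xy; rewrite /co_adj /multipartite_adj (negbTE xy) andbT /=.
by apply: contra xy => /eqP ->.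
Qed.

Lemma connected_co_adj : (exists b, 0 < n b)%N ->
  (forall k, exists b, b.1 != k /\ (0 < n b)%N) -> connected_graph co_adj.
Proof.
move=> [b0 b0_gt0] other; split; first by apply/card_gt0P; exists (vertex_at (Ordinal b0_gt0)).
move=> x y; have [xy|xy] := eqVneq (tag x).1 (tag y).1; last exact/connect1/co_adj_other_comp.
have [b [bx b_gt0]] := other (tag x).1.
apply: (@connect_trans _ _ (vertex_at (Ordinal b_gt0))); apply/connect1/co_adj_other_comp => //=.
  by rewrite eq_sym.
by rewrite -xy.
Qed.

(* A triangle: two vertices of [b] and one of [b']. *)
Lemma co_adj_not_bipartite b b' :
  (1 < n b)%N -> b'.1 != b.1 -> (0 < n b')%N -> ~ bipartite co_adj.
Proof.
move=> b_gt1 bb' b'_gt0; have b_gt0 := ltnW b_gt1.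
pose z0 := vertex_at (Ordinal b_gt0); pose z1 := vertex_at (Ordinal b_gt1).
pose z2 := vertex_at (Ordinal b'_gt0).
have e01 : co_adj z0 z1 by rewrite /co_adj eq_Tagged /= /multipartite_adj /= !eqxx.
have e02 : co_adj z0 z2 by apply: co_adj_other_comp; rewrite eq_sym.
have e12 : co_adj z1 z2 by apply: co_adj_other_comp; rewrite eq_sym.
move=> [f f_col]; move: (f_col _ _ e01) (f_col _ _ e02) (f_col _ _ e12).
by case: (f z0); case: (f z1); case: (f z2).
Qed.

End ComplementOfMultipartite.

Lemma AGM2_sqr_eq (p q r : nat) :
  (p * q = r * r -> 2 * r <= p + q ?= iff (p == q))%N.
Proof.
move=> pq; rewrite -(mono_leqif leq_sqr).
have -> : ((2 * r) ^ 2 = 4 * (p * q))%N by rewrite pq expnMn mulnn.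
exact: nat_AGM2.
Qed.

Lemma sumn_pair (I J : finType) (F : I * J -> nat) :
  (\sum_p F p = \sum_i \sum_j F (i, j))%N.
Proof. by rewrite pair_bigA; apply: eq_bigr => -[i j]. Qed.

Lemma sumr_pair (R : nmodType) (I J : finType) (F : I * J -> R) :
  \sum_p F p = \sum_i \sum_j F (i, j).
Proof. by rewrite pair_bigA; apply: eq_bigr => -[i j]. Qed.

Lemma pair_system_sqr (y s p q g1 g2 r : algC) :
  y * g1 = s - q * g2 -> y * g2 = s - p * g1 -> p * q = r ^+ 2 ->
  (y ^+ 2 - r ^+ 2) * g1 = s * (y - q).
Proof.
move=> eq1 eq2 pq.
have -> : (y ^+ 2 - r ^+ 2) * g1 = s * (y - q) + y * (y * g1 - (s - q * g2))
   - q * (y * g2 - (s - p * g1)) + (p * q - r ^+ 2) * g1 by ring.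
by rewrite eq1 eq2 pq !subrr; ring.
Qed.

Section ComplementOfBipartite.

Variables (D : finType) (m : D * bool -> nat) (r : nat).
Hypothesis m_gt0 : forall b, (0 < m b)%N.
Hypothesis m_prod : forall d, (m (d, true) * m (d, false))%N = (r * r)%N.
Hypothesis m_unbalanced : exists d, m (d, true) != m (d, false).

(* Each [K_{m(d,true), m(d,false)}] is taken twice: the copy index [b.1.2] is ignored. *)
Definition psize (b : (D * bool) * bool) : nat := m (b.1.1, b.2).

Local Notation opp b := (b.1, ~~ b.2).
Local Notation G := (@co_adj _ _ psize).

Lemma psize_opp_prod b : (psize b * psize (opp b))%N = (r * r)%N.
Proof. by case: b => [[d c] [|]]; rewrite /psize /= ?m_prod // mulnC m_prod. Qed.

Lemma psize_opp_prodC b : (psize b)%:R * (psize (opp b))%:R = r%:R ^+ 2 :> algC.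
Proof. by rewrite -natrM psize_opp_prod natrM expr2. Qed.

Lemma r_gt0 : (0 < r)%N.
Proof.
have [d _] := m_unbalanced.
by have := m_prod d; have := m_gt0 (d, true); have := m_gt0 (d, false); nia.
Qed.

Lemma psize_gt1 : exists b, (1 < psize b)%N.
Proof.
have [d m_neq] := m_unbalanced.
have [m_gt1|m_le1] := ltnP 1 (m (d, true)); first by exists ((d, true), true).
exists ((d, true), false); rewrite /psize /=.
by move: m_neq; have := m_gt0 (d, true); have := m_gt0 (d, false); lia.
Qed.

Definition order := (\sum_b psize b)%N.
Definition cross := (\sum_b psize b * psize (opp b))%N.

Lemma cross_eq : cross = (4 * #|D| * (r * r))%N.
Proof.
rewrite /cross (eq_bigr (fun=> r * r)%N) => [|b _]; last exact: psize_opp_prod.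
by rewrite sum_nat_const !card_prod card_bool; lia.
Qed.

(* Per component AM-GM gives [2 r^2 <= r (p + q)], strictly for an unbalanced one. *)
Lemma cross_lt : (cross < order * r)%N.
Proof.
have comp_le k : (r * (2 * r) <= r * (psize (k, true) + psize (k, false))
                   ?= iff (psize (k, true) == psize (k, false)))%N.
  rewrite (mono_leqif (fun n1 n2 => @leq_pmul2l r n1 n2 r_gt0)).
  exact/AGM2_sqr_eq/(psize_opp_prod (k, true)).
have [d m_neq] := m_unbalanced.
rewrite /cross /order big_distrl /= sumn_pair [X in (_ < X)%N]sumn_pair.
under eq_bigr => k _ do rewrite big_bool /= psize_opp_prod mulnC psize_opp_prod addnn -mul2n mulnCA.
under [X in (_ < X)%N]eq_bigr => k _ do rewrite big_bool /= -mulnDl mulnC.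
rewrite (ltn_leqif (leqif_sum (P := xpredT) (fun k _ => comp_le k))).
by apply/forallP => /(_ (d, false)); rewrite /psize /= (negbTE m_neq).
Qed.

Definition disc : algC := order%:R ^+ 2 - 4 * (cross%:R - r%:R ^+ 2).
Definition root_plus : algC := (order%:R + sqrtC disc) / 2.
Definition root_minus : algC := (order%:R - sqrtC disc) / 2.

(* The eigenvalues are [y - 1] for [y] in this list. *)
Definition eigen_shifts : seq algC := [:: 0; r%:R; - r%:R; root_plus; root_minus].

Lemma roots_factor y : (y - root_plus) * (y - root_minus) =
  y ^+ 2 - order%:R * y + (cross%:R - r%:R ^+ 2).
Proof.
have two_neq0 : (2 : algC) != 0 by rewrite pnatr_eq0.
rewrite /root_plus /root_minus.
transitivity (y ^+ 2 - order%:R * y + (order%:R ^+ 2 - sqrtC disc ^+ 2) / 4); first by field.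
by rewrite sqrtCK /disc; field.
Qed.

Lemma order_sum : order%:R = \sum_b (psize b)%:R :> algC.
Proof. by rewrite natr_sum. Qed.

Lemma cross_sum : cross%:R = \sum_b (psize b)%:R * (psize (opp b))%:R :> algC.
Proof. by rewrite natr_sum; apply: eq_bigr => b _; rewrite natrM. Qed.

Lemma block_rhs (g : D * bool * bool -> algC) k s :
  wsum psize g - comp_wsum psize k g + (psize (k, s))%:R * g (k, s) =
  wsum psize g - (psize (k, ~~ s))%:R * g (k, ~~ s).
Proof. by rewrite comp_wsum_pair big_bool; case: s => /=; ring. Qed.

Lemma eigenvalue_shift a : eigenvalue (adj_mx G) a -> a + 1 \in eigen_shifts.
Proof.
case/co_adj_eigen_blocks => [->|[g [[b0 [_ gb0]] g_sys]]]; first by rewrite addNr inE eqxx.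
set y := a + 1 in g_sys *.
set s := wsum psize g in g_sys.
have y_eq k c : y * g (k, c) = s - (psize (k, ~~ c))%:R * g (k, ~~ c).
  by rewrite g_sys block_rhs.
have [|y_neq_r] := eqVneq (y ^+ 2) (r%:R ^+ 2).
  by move/eqP; rewrite eqf_sqr => /orP [] /eqP ->; rewrite !inE eqxx ?orbT.
have {}y_neq_r : y ^+ 2 - r%:R ^+ 2 != 0 by rewrite subr_eq0.
have g_eq b : (y ^+ 2 - r%:R ^+ 2) * g b = s * (y - (psize (opp b))%:R).
  case: b => k c; apply: pair_system_sqr (y_eq k c) _ (psize_opp_prodC (k, c)).
  by have := y_eq k (~~ c); rewrite negbK.
have s_neq0 : s != 0.
  by apply: contra gb0 => /eqP s0; have /eqP := g_eq b0; rewrite s0 mul0r mulf_eq0 (negbTE y_neq_r).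
(* Weighting the block equations by the block sizes and summing gives the quadratic. *)
have s_eq : (y ^+ 2 - r%:R ^+ 2) * s = s * (y * order%:R - cross%:R).
  transitivity (\sum_b (psize b)%:R * ((y ^+ 2 - r%:R ^+ 2) * g b)).
    by rewrite /s /wsum mulr_sumr; apply: eq_bigr => b _; ring.
  rewrite order_sum cross_sum mulr_sumr -sumrB mulr_sumr.
  by apply: eq_bigr => b _; rewrite g_eq; ring.
have y_quad : y ^+ 2 - r%:R ^+ 2 = y * order%:R - cross%:R.
  by apply: (mulfI s_neq0); rewrite mulrC s_eq.
have /eqP : (y - root_plus) * (y - root_minus) = 0.
  by rewrite roots_factor -[y ^+ 2](subrK (r%:R ^+ 2)) y_quad; ring.
by rewrite mulf_eq0 => /orP [] /eqP/subr0_eq ->; rewrite !inE eqxx ?orbT.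
Qed.

Lemma wsum_copy_odd (g : D * bool * bool -> algC) :
  (forall d c s, g ((d, ~~ c), s) = - g ((d, c), s)) -> wsum psize g = 0.
Proof.
move=> g_odd; pose flip (b : D * bool * bool) := ((b.1.1, ~~ b.1.2), b.2).
have flipK : involutive flip by move=> [[d c] s]; rewrite /flip /= negbK.
have : wsum psize g = - wsum psize g.
  rewrite {1}/wsum (reindex_inj (inv_inj flipK)) /wsum -sumrN.
  by apply: eq_bigr => -[[d c] s] _; rewrite g_odd mulrN.
by move/eqP; rewrite -addr_eq0 -mulr2n mulrn_eq0 => /eqP.
Qed.

(* Eigenvectors for [y = r, -r] are odd in the copy index, so their weighted sum vanishes. *)
Lemma eigenvalue_sqr_r y : y ^+ 2 = r%:R ^+ 2 -> eigenvalue (adj_mx G) (y - 1).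
Proof.
move=> y_sqr; have [d _] := m_unbalanced.
pose g (b : D * bool * bool) : algC :=
  (-1) ^+ b.1.2 * (if b.2 then (m (b.1.1, false))%:R else - y).
have g_sum : wsum psize g = 0 by apply: wsum_copy_odd => d' c s; rewrite /g /= signrN mulNr.
apply: (@co_adj_eigenvalue_blocks _ _ _ _ g).
  exists ((d, false), true); split; first exact: m_gt0.
  by rewrite /g /= mul1r pnatr_eq0 -lt0n m_gt0.
move=> [[d' c] s] _; rewrite subrK block_rhs g_sum sub0r /g /=.
case: s => /=; first by ring.
have := psize_opp_prodC ((d', c), true); rewrite /psize /= => m_prodC.
transitivity (- ((-1) ^+ c * y ^+ 2)); first by ring.
by rewrite y_sqr -m_prodC; ring.
Qed.

Lemma eigenvalue_root y :
  y ^+ 2 = y * order%:R - cross%:R + r%:R ^+ 2 -> eigenvalue (adj_mx G) (y - 1).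
Proof.
move=> y_root; have [d m_neq] := m_unbalanced.
pose g (b : D * bool * bool) : algC := y - (psize (opp b))%:R.
have g_sum : wsum psize g = y * order%:R - cross%:R.
  rewrite /wsum order_sum cross_sum mulr_sumr -sumrB; apply: eq_bigr => b _.
  by rewrite /g; ring.
apply: (@co_adj_eigenvalue_blocks _ _ _ _ g).
  have [y_eq|y_neq] := eqVneq y (m (d, true))%:R.
    exists ((d, false), true); split; first exact: m_gt0.
    by rewrite /g /psize /= y_eq subr_eq0 eqr_nat.
  by exists ((d, false), false); split; [exact: m_gt0 | rewrite /g subr_eq0].
move=> [k s] _; rewrite subrK block_rhs g_sum /g /= negbK.
have := psize_opp_prodC (k, s); rewrite /= => prodC.
apply/eqP; rewrite -subr_eq0.
have -> : y * (y - (psize (k, ~~ s))%:R) -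
    (y * order%:R - cross%:R - (psize (k, ~~ s))%:R * (y - (psize (k, s))%:R)) =
    (y ^+ 2 - (y * order%:R - cross%:R + r%:R ^+ 2)) -
    ((psize (k, s))%:R * (psize (k, ~~ s))%:R - r%:R ^+ 2) by ring.
by rewrite y_root prodC !subrr.
Qed.

Lemma root_quadratic (y : algC) : (y - root_plus) * (y - root_minus) = 0 ->
  y ^+ 2 = y * order%:R - cross%:R + r%:R ^+ 2.
Proof. by rewrite roots_factor => quad0; rewrite -[LHS]subr0 -quad0; ring. Qed.

Lemma D_gt0 : (0 < #|D|)%N.
Proof. by have [d _] := m_unbalanced; apply/card_gt0P; exists d. Qed.

Lemma root_neq (y : algC) : y ^+ 2 = y * order%:R - cross%:R + r%:R ^+ 2 ->
  [/\ y != 0, y != r%:R & y != - r%:R].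
Proof.
have r_pos := r_gt0; have D_pos := D_gt0; have K_lt := cross_lt; have K_eq := cross_eq.
move=> y_root; split; apply/eqP => y_eq; move: y_root; rewrite y_eq => /eqP.
- by rewrite expr0n /= mul0r sub0r eq_sym addrC subr_eq0 -natrX eqr_nat; nia.
- rewrite -subr_eq0 [X in X == 0](_ : _ = cross%:R - r%:R * order%:R); last by ring.
  by rewrite subr_eq0 -natrM eqr_nat; lia.
- rewrite -subr_eq0 [X in X == 0](_ : _ = (cross + r * order)%:R); last first.
    by rewrite natrD natrM; ring.
  by rewrite pnatr_eq0; nia.
Qed.

Lemma roots_neq : root_plus != root_minus.
Proof.
have r_pos := r_gt0; have D_pos := D_gt0; have K_lt := cross_lt; rewrite cross_eq in K_lt.
have two_neq0 : (2 : algC) != 0 by rewrite pnatr_eq0.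
have K_ge : (r ^ 2 <= cross)%N by rewrite cross_eq; nia.
rewrite -subr_eq0 (_ : _ - _ = sqrtC disc); last by rewrite /root_plus /root_minus; field.
rewrite sqrtC_eq0 /disc subr_eq0 -!natrX -[4]/(4%:R) -natrB // -natrM eqr_nat cross_eq.
have N_gt : (4 * #|D| * r < order)%N by rewrite -(ltn_pmul2r r_pos); nia.
by nia.
Qed.

Lemma uniq_eigen_shifts : uniq eigen_shifts.
Proof.
have rootP : (root_plus - root_plus) * (root_plus - root_minus) = 0 by rewrite subrr mul0r.
have rootM : (root_minus - root_plus) * (root_minus - root_minus) = 0 by rewrite subrr mulr0.
have [P0 Pr PNr] := root_neq (root_quadratic rootP).
have [M0 Mr MNr] := root_neq (root_quadratic rootM).
have r0 : r%:R != 0 :> algC by rewrite pnatr_eq0 -lt0n r_gt0.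
have rNr : r%:R != - r%:R :> algC by rewrite -addr_eq0 -mulr2n mulrn_eq0 (negbTE r0).
rewrite /= !inE !negb_or (eq_sym 0 r%:R) (eq_sym 0 (- r%:R)) oppr_eq0 r0 rNr roots_neq.
by rewrite ![_ == root_plus]eq_sym ![_ == root_minus]eq_sym P0 M0 Pr Mr PNr MNr.
Qed.

Lemma spectrum_co_adj : num_distinct_eigenvalues G 5.
Proof.
exists [seq y - 1 | y <- eigen_shifts]; split.
  by rewrite map_inj_uniq ?uniq_eigen_shifts //; exact: addIr.
split=> // a; split.
  by move/eigenvalue_shift/(map_f (fun y => y - 1)); rewrite addrK.
move/mapP=> [y]; rewrite !inE => /or4P [/eqP->|/eqP->|/eqP->|/orP [] /eqP->] ->.
- by have [b] := psize_gt1; rewrite sub0r; exact: co_adj_eigenvalue_twin.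
- exact: eigenvalue_sqr_r.
- by apply: eigenvalue_sqr_r; rewrite sqrrN.
- by apply/eigenvalue_root/root_quadratic; rewrite subrr mul0r.
- by apply/eigenvalue_root/root_quadratic; rewrite subrr mulr0.
Qed.

Lemma co_adj_bipartite_props :
  [/\ simple_graph G, connected_graph G, ~ bipartite G & num_distinct_eigenvalues G 5].
Proof.
split; [exact: simple_graph_co_adj | | | exact: spectrum_co_adj].
  apply: connected_co_adj.
    by have [d _] := m_unbalanced; exists ((d, false), true); apply: m_gt0.
  move=> [d c]; exists ((d, ~~ c), true); split; last exact: m_gt0.
  by rewrite xpair_eqE eqxx; case: c.
have [[[d c] s] b_gt1] := psize_gt1.
apply: (co_adj_not_bipartite (b' := ((d, ~~ c), s)) b_gt1); last exact: m_gt0.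
by rewrite xpair_eqE eqxx /=; case: (c).
Qed.

Lemma degree_co_adj_opp x : (degree G x + 1 + psize (opp (tag x)))%N = #|vertex psize|.
Proof.
rewrite -(degree_co_adj x) (big_pred1 (opp (tag x))) // => -[k s].
by rewrite /= xpair_eqE; case: s; case: (tag x).2.
Qed.

Lemma num_valencies_co_adj (s : seq nat) :
  uniq s -> (forall j, j \in s <-> exists b, m b = j) -> num_valencies G = size s.
Proof.
move=> s_uniq s_sizes; pose deg j := (#|vertex psize| - 1 - j)%N.
have deg_opp x : degree G x = deg (psize (opp (tag x))).
  by rewrite /deg -(degree_co_adj_opp x); lia.
have opp_size b : exists x : vertex psize, psize (opp (tag x)) = m b.
  exists (vertex_at (Ordinal (m_gt0 (b.1, ~~ b.2)) : 'I_(psize ((b.1, false), ~~ b.2)))).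
  by rewrite /psize /= negbK -surjective_pairing.
have size_lt j : j \in s -> (j < #|vertex psize|)%N.
  by move/s_sizes=> [b <-]; have [x <-] := opp_size b; rewrite -(degree_co_adj_opp x); lia.
rewrite -(size_map deg); apply: num_valencies_eq => [|d].
  rewrite map_inj_in_uniq // => j1 j2 j1s j2s; rewrite /deg.
  by have := size_lt j1 j1s; have := size_lt j2 j2s; lia.
split.
  by move=> /mapP [j /s_sizes [b <-] ->]; have [x xb] := opp_size b; exists x; rewrite deg_opp xb.
move=> [x <-]; apply/mapP; exists (psize (opp (tag x))); last exact: deg_opp.
by apply/s_sizes; exists ((tag x).1.1, ~~ (tag x).2).
Qed.

End ComplementOfBipartite.

Definition pow4_size (t : nat) (b : 'I_t * bool) : nat :=
  (if b.2 then 4 ^ b.1 else 4 ^ (t.-1 - b.1))%N.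

Lemma pow4_size_gt0 t (b : 'I_t * bool) : (0 < pow4_size b)%N.
Proof. by rewrite /pow4_size; case: b.2; rewrite expn_gt0. Qed.

Lemma pow4_size_prod t (i : 'I_t) :
  (pow4_size (i, true) * pow4_size (i, false) = 2 ^ t.-1 * 2 ^ t.-1)%N.
Proof.
have i_le : (i <= t.-1)%N by have := ltn_ord i; lia.
by rewrite /pow4_size /= -!expnD (subnKC i_le) addnn -mul2n expnM.
Qed.

Lemma pow4_size_unbalanced t (t_gt1 : (1 < t)%N) :
  exists i : 'I_t, pow4_size (i, true) != pow4_size (i, false).
Proof.
exists (Ordinal (ltnW t_gt1)); rewrite /pow4_size /= subn0 expn0 eq_sym -(expn0 4).
by rewrite eqn_exp2l // -lt0n -ltnS prednK // ltnW.
Qed.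

Lemma pow4_sizesP t j :
  j \in [seq 4 ^ i | i <- iota 0 t]%N <-> exists b : 'I_t * bool, pow4_size b = j.
Proof.
split=> [/mapP [i]|[[i [|]] <-]]; rewrite ?mem_iota ?add0n.
- by move=> i_lt ->; exists (Ordinal i_lt, true).
- by apply/mapP; exists (i : nat); rewrite // mem_iota ltn_ord.
apply/mapP; exists (t.-1 - i)%N => //.
by rewrite mem_iota add0n; have := ltn_ord i; lia.
Qed.

Lemma pow4_graph t : (1 < t)%N ->
  exists (T : finType) (e : rel T),
    [/\ simple_graph e, connected_graph e, ~ bipartite e,
        num_distinct_eigenvalues e 5 & num_valencies e = t].
Proof.
move=> t_gt1; have unbalanced := pow4_size_unbalanced t_gt1.
have [simple conn nonbip spec] :=
  co_adj_bipartite_props (@pow4_size_gt0 t) (@pow4_size_prod t) unbalanced.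
exists (vertex (psize (pow4_size (t := t)))), (co_adj (n := psize (pow4_size (t := t)))).
split=> //; rewrite (num_valencies_co_adj (@pow4_size_gt0 t) _ (@pow4_sizesP t)).
  by rewrite size_map size_iota.
by rewrite map_inj_uniq ?iota_uniq // => i j /eqP; rewrite eqn_exp2l // => /eqP.
Qed.

(* Component [true] is [K_{1,1,1}] and component [false] is [K_{2,2}] (the parts are
   indexed by [bool * bool], unused ones empty): the complement of [K_3 + C_4]. *)
Definition tri_sq_size (b : bool * (bool * bool)) : nat :=
  if b.1 then (if b.2.1 && b.2.2 then 0 else 1)%N else (if b.2.1 == b.2.2 then 2 else 0)%N.

Local Notation H := (@co_adj _ _ tri_sq_size).

Lemma tri_sq_wsum (g : bool * (bool * bool) -> algC) :
  wsum tri_sq_size g = 2 * g (false, (true, true)) + 2 * g (false, (false, false))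
    + g (true, (true, false)) + g (true, (false, true)) + g (true, (false, false)).
Proof. by rewrite /wsum sumr_pair !big_bool !sumr_pair !big_bool /tri_sq_size /=; ring. Qed.

Lemma tri_sq_comp_wsum (g : bool * (bool * bool) -> algC) c :
  comp_wsum tri_sq_size c g =
    if c then g (true, (true, false)) + g (true, (false, true)) + g (true, (false, false))
    else 2 * g (false, (true, true)) + 2 * g (false, (false, false)).
Proof. by rewrite comp_wsum_pair sumr_pair !big_bool; case: c; rewrite /tri_sq_size /=; ring. Qed.

Lemma tri_sq_system (y u1 u2 v1 v2 v3 : algC) :
  let s := 2 * u1 + 2 * u2 + v1 + v2 + v3 in
  y * u1 = s - 2 * u2 -> y * u2 = s - 2 * u1 ->
  y * v1 = s - (v2 + v3) -> y * v2 = s - (v1 + v3) -> y * v3 = s - (v1 + v2) ->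
  y \in [:: 0; 1; 2; -2; 5] \/ [/\ u1 = 0, u2 = 0, v1 = 0, v2 = 0 & v3 = 0].
Proof.
move=> s eu1 eu2 ev1 ev2 ev3.
have [y_in|y_out] := boolP (y \in [:: 0; 1; 2; -2; 5]); [by left | right].
move: y_out; rewrite !inE !negb_or => /and5P [_ y1 y2 yN2 y5].
have eq_of c w1 w2 : y != c -> (y - c) * (w1 - w2) = 0 -> w1 = w2.
  by move=> yc /eqP; rewrite mulf_eq0 !subr_eq0 (negbTE yc) => /eqP.
have v12 : v1 = v2.
  apply: (eq_of 1) => //; transitivity (y * v1 - y * v2 - (v1 - v2)); first by ring.
  by rewrite ev1 ev2; ring.
have v13 : v1 = v3.
  apply: (eq_of 1) => //; transitivity (y * v1 - y * v3 - (v1 - v3)); first by ring.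
  by rewrite ev1 ev3; ring.
have u12 : u1 = u2.
  apply: (eq_of 2) => //; transitivity (y * u1 - y * u2 - 2 * (u1 - u2)); first by ring.
  by rewrite eu1 eu2; ring.
have uv : u1 = v1.
  apply: (eq_of (-2)) => //; transitivity (y * u1 - y * v1 + 2 * (u1 - v1)); first by ring.
  by rewrite eu1 ev1 /s -u12 -v12 -v13; ring.
have u0 : u1 = 0.
  apply: (eq_of 5) => //; transitivity (y * u1 - 5 * u1); first by ring.
  by rewrite eu1 /s -u12 -v12 -v13 -uv; ring.
by split; rewrite -?u12 -?v13 -?v12 -?uv.
Qed.

Lemma tri_sq_eigenvalue_shift a :
  eigenvalue (adj_mx H) a -> a + 1 \in [:: 0; 1; 2; -2; 5].
Proof.
case/co_adj_eigen_blocks => [->|[g [[b0 [b0_gt0 gb0]] g_sys]]]; first by rewrite addNr inE eqxx.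
set u1 := g (false, (true, true)); set u2 := g (false, (false, false)).
set v1 := g (true, (true, false)); set v2 := g (true, (false, true)).
set v3 := g (true, (false, false)); set s := 2 * u1 + 2 * u2 + v1 + v2 + v3.
have sys c p1 p2 : (a + 1) * g (c, (p1, p2)) =
    s - (if c then v1 + v2 + v3 else 2 * u1 + 2 * u2) +
    (tri_sq_size (c, (p1, p2)))%:R * g (c, (p1, p2)).
  by rewrite g_sys tri_sq_wsum tri_sq_comp_wsum.
have eu1 : (a + 1) * u1 = s - 2 * u2 by rewrite sys /tri_sq_size /s /u1 /u2 /v1 /v2 /v3 /=; ring.
have eu2 : (a + 1) * u2 = s - 2 * u1 by rewrite sys /tri_sq_size /s /u1 /u2 /v1 /v2 /v3 /=; ring.
have ev1 : (a + 1) * v1 = s - (v2 + v3) by rewrite sys /tri_sq_size /s /u1 /u2 /v1 /v2 /v3 /=; ring.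
have ev2 : (a + 1) * v2 = s - (v1 + v3) by rewrite sys /tri_sq_size /s /u1 /u2 /v1 /v2 /v3 /=; ring.
have ev3 : (a + 1) * v3 = s - (v1 + v2) by rewrite sys /tri_sq_size /s /u1 /u2 /v1 /v2 /v3 /=; ring.
have [//|[gu1 gu2 gv1 gv2 gv3]] := tri_sq_system eu1 eu2 ev1 ev2 ev3.
move: b0_gt0 gb0; case: b0 => -[] [[] []] //= _ /negP[]; apply/eqP.
all: first [exact: gu1 | exact: gu2 | exact: gv1 | exact: gv2 | exact: gv3].
Qed.

Lemma tri_sq_eigenvalue y :
  y \in [:: 0; 1; 2; -2; 5] -> eigenvalue (adj_mx H) (y - 1).
Proof.
rewrite !inE => /or4P [/eqP->|/eqP->|/eqP->|/orP [] /eqP->].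
- by rewrite sub0r; apply: (@co_adj_eigenvalue_twin _ _ _ (false, (true, true))).
- pose g b : algC := match b with
    | (true, (true, false)) => 1 | (true, (false, true)) => -1 | _ => 0 end.
  apply: (@co_adj_eigenvalue_blocks _ _ _ _ g).
    by exists (true, (true, false)); rewrite /g oner_eq0.
  by move=> [[] [[] []]] //= _; rewrite tri_sq_wsum tri_sq_comp_wsum /g /tri_sq_size /=; ring.
- pose g b : algC := match b with
    | (false, (true, true)) => 1 | (false, (false, false)) => -1 | _ => 0 end.
  apply: (@co_adj_eigenvalue_blocks _ _ _ _ g).
    by exists (false, (true, true)); rewrite /g oner_eq0.
  by move=> [[] [[] []]] //= _; rewrite tri_sq_wsum tri_sq_comp_wsum /g /tri_sq_size /=; ring.
- pose g (b : bool * (bool * bool)) : algC := if b.1 then -4 else 3.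
  apply: (@co_adj_eigenvalue_blocks _ _ _ _ g).
    by exists (false, (true, true)); rewrite /g pnatr_eq0.
  by move=> [[] [[] []]] //= _; rewrite tri_sq_wsum tri_sq_comp_wsum /g /tri_sq_size /=; ring.
- apply: (@co_adj_eigenvalue_blocks _ _ _ _ (fun=> 1)).
    by exists (false, (true, true)); rewrite oner_eq0.
  by move=> [[] [[] []]] //= _; rewrite tri_sq_wsum tri_sq_comp_wsum /tri_sq_size /=; ring.
Qed.

Lemma uniq_tri_sq_shifts : uniq [:: 0; 1; 2; -2; 5 : algC].
Proof.
have -> : [:: 0; 1; 2; -2; 5] = [seq n%:R - 2 | n <- [:: 2; 3; 4; 0; 7]%N] :> seq algC.
  by rewrite /=; congr [:: _; _; _; _; _]; ring.
by rewrite map_inj_uniq // => m n /addIr /eqP; rewrite eqr_nat => /eqP.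
Qed.

Lemma tri_sq_degree (x : vertex tri_sq_size) : degree H x = 4%N.
Proof.
have := degree_co_adj x.
rewrite card_vertex big_mkcond /= !sumn_pair !big_bool /= !sumn_pair !big_bool /=.
by move: (tag x) (block_gt0 x) => -[[] [[] []]] //= _; rewrite /tri_sq_size /=; lia.
Qed.

Lemma tri_sq_graph : exists (T : finType) (e : rel T),
  [/\ simple_graph e, connected_graph e, ~ bipartite e,
      num_distinct_eigenvalues e 5 & num_valencies e = 1%N].
Proof.
exists (vertex tri_sq_size), H; split.
- exact: simple_graph_co_adj.
- apply: connected_co_adj => [|[]]; first by exists (false, (true, true)).
    by exists (false, (true, true)).
  by exists (true, (true, false)).
- exact: (@co_adj_not_bipartite _ _ _ (false, (true, true)) (true, (true, false))).
- exists [seq y - 1 | y <- [:: 0; 1; 2; -2; 5]]; split.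
    by rewrite map_inj_uniq ?uniq_tri_sq_shifts //; exact: addIr.
  split=> // a; split.
    by move/tri_sq_eigenvalue_shift/(map_f (fun y => y - 1)); rewrite addrK.
  by move/mapP=> [y y_in ->]; exact: tri_sq_eigenvalue.
- apply: (@num_valencies_eq _ _ [:: 4%N]) => // d; rewrite inE; split.
    move/eqP->; exists (vertex_at (Ordinal (isT : (0 < tri_sq_size (false, (true, true)))%N))).
    exact: tri_sq_degree.
  by move=> [x <-]; rewrite tri_sq_degree.
Qed.

Theorem theorem3 (t : nat) : (1 <= t)%N ->
  exists (T : finType) (e : rel T),
    [/\ simple_graph e, connected_graph e, ~ bipartite e,
        num_distinct_eigenvalues e 5 & num_valencies e = t].
Proof.
move=> t_ge1; have [t_le1|t_gt1] := leqP t 1; last exact: pow4_graph.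
have -> : t = 1%N by lia.
exact: tri_sq_graph.
Qed.
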